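(* For every integer $n\ge1$, \[ -\omega(n)=\sum_{\substack{m+k=n\\ m\ge1,\ k\ge0}}p_\psi(m)\,\Omega_m(k). \]
   Context: $p_\psi(n)$ is the number of relatively prime partitions of $n$, i.e. partitions of $n$ whose parts have greatest common divisor $1$. $\omega:\mathbb{Z}\to\mathbb{Z}$ is defined by $\omega(0)=1$; $\omega(m)=(-1)^j$ if $m=\frac{3j^2\pm j}{2}$ for some integer $j\ge1$; $\omega(m)=0$ otherwise (in particular for $m<0$). For $m\ge1$ and integer $k$, $\Omega_m(k)=\sum_{j\ge0}\omega(k-jm)=\omega(k)+\omega(k-m)+\omega(k-2m)+\cdots$. *)

From mathcomp Require Import all_boot all_order all_algebra.
Set Implicit Arguments. Unset Strict Implicit. Unset Printing Implicit Defensive.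
Import Order.TTheory GRing.Theory Num.Theory.

(* A partition of n is encoded by its multiplicity function:
   f i = number of parts equal to i.+1 (parts are in 1..n, multiplicities <= n). *)
Definition is_partition (n : nat) (f : {ffun 'I_n -> 'I_n.+1}) : bool :=
  (\sum_(i < n) i.+1 * f i)%N == n.

Definition parts_gcd (n : nat) (f : {ffun 'I_n -> 'I_n.+1}) : nat :=
  \big[gcdn/0%N]_(i < n | (0 < f i)%N) i.+1.

Definition p_psi (n : nat) : nat :=
  #|[set f : {ffun 'I_n -> 'I_n.+1} | is_partition f && (parts_gcd f == 1%N)]|.

Local Open Scope ring_scope.

Definition pent_idx (m : int) (j : nat) : bool :=
  (0 < j)%N && ((2 * m == (3 * j ^ 2 + j)%N%:Z) || (2 * m == (3 * j ^ 2 - j)%N%:Z)).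

(* omega(0) = 1; omega(m) = (-1)^j if m = (3j^2 +- j)/2 with j >= 1; else 0.
   Any such j satisfies j <= |m| (and is unique), so the search range is complete. *)
Definition omega (m : int) : int :=
  if m == 0 then 1 else
  match [pick j : 'I_(`|m|%N.+1) | pent_idx m j] with
  | Some j => (-1) ^+ (nat_of_ord j)
  | None => 0
  end.

(* Omega_m(k) = sum_{j >= 0} omega(k - j m); for k >= 0, m >= 1 the terms with
   j > k have negative argument, hence vanish. *)
Definition Omega (m : nat) (k : int) : int :=
  \sum_(0 <= j < `|k|%N.+1) omega (k - (j * m)%N%:Z).

From mathcomp Require Import all_boot all_order all_algebra.
From mathcomp Require Import zify ring.
Set Implicit Arguments. Unset Strict Implicit. Unset Printing Implicit Defensive.
Import Order.TTheory GRing.Theory Num.Theory.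
Local Open Scope ring_scope.

(* Let E = prod_(i <= n) (1 - X^i) and P = prod_(i <= n) sum_(j <= n) X^(i j).
   Shanks' finite form of Euler's pentagonal theorem shows that the
   coefficients of E up to degree n are omega(0), ..., omega(n); those of P are
   the partition numbers p(0), ..., p(n), and E P = 1 mod X^(n+1), whence
   sum_(i <= n) omega(i) p(n - i) = 0 for n >= 1.  Dividing every part by the
   gcd d of the parts shows that p_psi(k / d) partitions of k have gcd d, so
   p(k) = sum_(m | k) p_psi(m).  Substituting and exchanging the sums, the
   coefficient of p_psi(m) is sum_(i < n, m | n - i) omega(i) = Omega_m(n - m). *)

Section CongruenceModXn.
Variable R : comNzRingType.
Implicit Types (a b c d : {poly R}) (K : nat).

Definition eqmodXn K a b := exists c, a - b = 'X^K * c.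

Lemma eqmodXn_refl K a : eqmodXn K a a.
Proof. by exists 0; rewrite subrr mulr0. Qed.

Lemma eqmodXnD K a b c d :
  eqmodXn K a b -> eqmodXn K c d -> eqmodXn K (a + c) (b + d).
Proof.
case=> u hu [v hv]; exists (u + v); rewrite mulrDr -hu -hv; ring.
Qed.

Lemma eqmodXnN K a b : eqmodXn K a b -> eqmodXn K (- a) (- b).
Proof. by case=> c h; exists (- c); rewrite mulrN -h; ring. Qed.

Lemma eqmodXnM K a b c d :
  eqmodXn K a b -> eqmodXn K c d -> eqmodXn K (a * c) (b * d).
Proof.
case=> u hu [v hv]; exists (a * v + u * d).
have -> : a * c - b * d = a * (c - d) + (a - b) * d by ring.
by rewrite hu hv mulrDr !mulrA [a * _]mulrC.
Qed.

Lemma eqmodXn_sum K (I : Type) (r : seq I) (P : pred I) (F G : I -> {poly R}) :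
  (forall i, P i -> eqmodXn K (F i) (G i)) ->
  eqmodXn K (\sum_(i <- r | P i) F i) (\sum_(i <- r | P i) G i).
Proof. by apply: big_ind2; [apply: eqmodXn_refl | apply: eqmodXnD]. Qed.

Lemma eqmodXn_prod K (I : Type) (r : seq I) (P : pred I) (F G : I -> {poly R}) :
  (forall i, P i -> eqmodXn K (F i) (G i)) ->
  eqmodXn K (\prod_(i <- r | P i) F i) (\prod_(i <- r | P i) G i).
Proof. by apply: big_ind2; [apply: eqmodXn_refl | apply: eqmodXnM]. Qed.

Lemma eqmodXn_sum0 K (I : Type) (r : seq I) (P : pred I) (F : I -> {poly R}) :
  (forall i, P i -> eqmodXn K (F i) 0) -> eqmodXn K (\sum_(i <- r | P i) F i) 0.
Proof.
move=> F0; rewrite [X in eqmodXn _ _ X](_ : 0 = \sum_(i <- r | P i) 0).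
  exact: eqmodXn_sum.
by rewrite big1.
Qed.

Lemma eqmodXn_prod1 K (I : Type) (r : seq I) (P : pred I) (F : I -> {poly R}) :
  (forall i, P i -> eqmodXn K (F i) 1) -> eqmodXn K (\prod_(i <- r | P i) F i) 1.
Proof.
move=> F1; rewrite [X in eqmodXn _ _ X](_ : 1 = \prod_(i <- r | P i) 1).
  exact: eqmodXn_prod.
by rewrite big1.
Qed.

Lemma eqmodXn_addr0 K a b : eqmodXn K b 0 -> eqmodXn K (a + b) a.
Proof.
by move=> b0; rewrite -[X in eqmodXn _ _ X]addr0; apply: eqmodXnD (eqmodXn_refl _ _) b0.
Qed.

Lemma eqmodXn_coef K a b i : eqmodXn K a b -> (i < K)%N -> a`_i = b`_i.
Proof. by case=> c h lt; apply/eqP; rewrite -subr_eq0 -coefB h coefXnM lt. Qed.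

Lemma eqmodXn_Xn0 K e : (K <= e)%N -> eqmodXn K 'X^e 0.
Proof. by move=> le; exists 'X^(e - K); rewrite subr0 -exprD subnKC. Qed.

End CongruenceModXn.

Definition euler_tail (n k : nat) : {poly int} := \prod_(k <= i < n) (1 - 'X^(i.+1)).
Definition shanks_exp (n k : nat) : nat := (n * k + 'C(k.+1, 2))%N.
Definition shanks (n : nat) : {poly int} :=
  \sum_(0 <= k < n.+1) (-1) ^+ k * euler_tail n k * 'X^(shanks_exp n k).

Definition pent_plus (j : nat) : nat := (j * j + 'C(j.+1, 2))%N.
Definition pent_minus (j : nat) : nat := (j * j + 'C(j, 2))%N.
(* The factor (0 < j) keeps the constant term from being counted twice:
   pent_plus 0 = pent_minus 0 = 0. *)
Definition pentagonal (n : nat) : {poly int} :=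
  \sum_(0 <= j < n.+1) (-1) ^+ j * ('X^(pent_plus j) + (0 < j)%N%:R * 'X^(pent_minus j)).

Lemma euler_tailnn n : euler_tail n n = 1.
Proof. by rewrite /euler_tail big_geq. Qed.

Lemma euler_tailSr n k :
  (k <= n)%N -> euler_tail n.+1 k = euler_tail n k * (1 - 'X^(n.+1)).
Proof. by move=> le; rewrite /euler_tail big_nat_recr. Qed.

Lemma euler_tailSl n k : (k < n)%N -> euler_tail n k = (1 - 'X^(k.+1)) * euler_tail n k.+1.
Proof. by move=> lt; rewrite /euler_tail big_ltn. Qed.

(* Shanks' telescoping: splitting each factor (1 - X^(n+1)) of the
   (n+1)-th sum and shifting the index of the X^(n+1) part leaves only the
   top two pentagonal monomials. *)
Lemma shanksS n :
  shanks n.+1 = shanks n + (-1) ^+ n.+1 * ('X^(pent_plus n.+1) + 'X^(pent_minus n.+1)).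
Proof.
have eS k : shanks_exp n.+1 k = (shanks_exp n k + k)%N by rewrite /shanks_exp; lia.
have eSk k : shanks_exp n k.+1 = (shanks_exp n.+1 k + n.+1)%N.
  by rewrite /shanks_exp binS bin1; lia.
set U := \sum_(0 <= k < n.+1) (-1) ^+ k * euler_tail n k * 'X^(shanks_exp n.+1 k).
set V := \sum_(0 <= k < n.+1) (-1) ^+ k * euler_tail n k * 'X^(shanks_exp n.+1 k + n.+1).
set top := (-1) ^+ n * 'X^(shanks_exp n.+1 n + n.+1) : {poly int}.
have shanks_UV : shanks n - U = - V + top.
  rewrite /shanks /U -sumrB big_nat_recl // eS addn0 subrr add0r.
  rewrite /V big_nat_recr //= euler_tailnn mulr1 opprD addrC addrA addrAC subrr add0r.
  rewrite -sumrN.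
  apply: eq_big_nat => k /andP [_ lt].
  rewrite eS eSk (euler_tailSl lt) exprS exprD !exprD; ring.
have shanksS_UV : shanks n.+1 = U - V + (-1) ^+ n.+1 * 'X^(pent_plus n.+1).
  rewrite /shanks big_nat_recr //= euler_tailnn mulr1 /U /V -sumrB.
  congr (_ + _); apply: eq_big_nat => k /andP [_ lt].
  by rewrite euler_tailSr // exprD; ring.
have top_pent : (shanks_exp n.+1 n + n.+1)%N = pent_minus n.+1.
  by rewrite /shanks_exp /pent_minus binS bin1; lia.
rewrite shanksS_UV (_ : U = shanks n + V - top).
  by rewrite /top top_pent exprS; ring.
by rewrite -[shanks n](subrK U) shanks_UV; ring.
Qed.

Lemma shanks_pentagonal n : shanks n = pentagonal n.
Proof.
elim: n => [|n IH].
  by rewrite /shanks /pentagonal !big_nat1 euler_tailnn /= !expr0 mul0r addr0 !mulr1.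
by rewrite shanksS IH /pentagonal [in RHS]big_nat_recr //= mul1r.
Qed.

Lemma shanks_euler_tail n : eqmodXn n.+1 (shanks n) (euler_tail n 0).
Proof.
rewrite /shanks big_nat_recl //= /shanks_exp muln0 expr0 mulr1 mul1r.
apply/eqmodXn_addr0/eqmodXn_sum0 => j _.
rewrite -(mulr0 ((-1) ^+ j.+1 * euler_tail n j.+1)).
apply/eqmodXnM/eqmodXn_Xn0; first exact: eqmodXn_refl.
by rewrite binS bin1; nia.
Qed.

Lemma mul2_bin2S j : (2 * 'C(j.+1, 2) = j.+1 * j)%N.
Proof. by elim: j => [//|j IH]; rewrite binS bin1; lia. Qed.

Lemma pent_plus2 j : (2 * pent_plus j = 3 * j ^ 2 + j)%N.
Proof. by rewrite /pent_plus mulnDr mul2_bin2S; lia. Qed.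

Lemma pent_minus2 j : (2 * pent_minus j = 3 * j ^ 2 - j)%N.
Proof. by rewrite /pent_minus mulnDr; case: j => [//|j]; rewrite mul2_bin2S; lia. Qed.

Lemma pent_idxE (t j : nat) :
  pent_idx t%:Z j = (0 < j)%N && ((t == pent_plus j) || (t == pent_minus j)).
Proof. by rewrite /pent_idx -PoszM !eqz_nat -pent_plus2 -pent_minus2 !eqn_mul2l. Qed.

Lemma pent_idx_leq (t j : nat) : pent_idx t%:Z j -> (j <= t)%N.
Proof.
by rewrite pent_idxE => /andP [_ /orP [] /eqP ->]; rewrite /pent_plus /pent_minus; nia.
Qed.

Lemma pent_idx_uniq (t j k : nat) : pent_idx t%:Z j -> pent_idx t%:Z k -> j = k.
Proof.
rewrite /pent_idx -PoszM !eqz_nat.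
move=> /andP [j0 /orP [] /eqP hj] /andP [k0 /orP [] /eqP hk];
  by case: (ltngtP j k) => // _; nia.
Qed.

Lemma coef_signM j (p : {poly int}) t : ((-1) ^+ j * p)`_t = (-1) ^+ j * p`_t.
Proof. by rewrite -coefCM rmorphXn rmorphN1. Qed.

Lemma coef_pentagonal_term j t : (0 < t)%N ->
  ((-1) ^+ j * ('X^(pent_plus j) + (0 < j)%N%:R * 'X^(pent_minus j)))`_t =
  if pent_idx t%:Z j then (-1) ^+ j else 0 :> int.
Proof.
move=> t0; rewrite coef_signM coefD mulr_natl coefMn !coefXn pent_idxE.
case: j => [|j] /=; first by rewrite mulr0n addr0; case: t t0.
have ne : pent_plus j.+1 != pent_minus j.+1.
  by apply/eqP => eq_pm; have := pent_plus2 j.+1; rewrite eq_pm pent_minus2; lia.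
rewrite mulr1n; case: (t =P pent_plus j.+1) => [->|_] /=.
  by rewrite (negbTE ne) addr0 mulr1.
by case: (t == pent_minus j.+1); rewrite ?add0r ?mulr1 ?mulr0.
Qed.

Lemma omega_neg (m : int) : m < 0 -> omega m = 0.
Proof.
move=> m0; rewrite /omega (negbTE (ltr0_neq0 m0)).
by case: pickP => // j; rewrite /pent_idx => /andP [_ /orP [] /eqP h]; lia.
Qed.

Lemma coef_pentagonal n t : (t <= n)%N -> (pentagonal n)`_t = omega t%:Z.
Proof.
move=> le; rewrite /pentagonal coef_sum.
case: t le => [|t] le.
  rewrite big_nat_recl // big1 ?addr0 => [|j _].
    by rewrite /pent_plus /= mul0r addr0 expr0 mul1r coefXn.
  rewrite coef_signM coefD mulr_natl coefMn !coefXn /pent_plus /pent_minus /=.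
  by rewrite add0r mul0rn mulr0.
under eq_big_nat => j _ do rewrite coef_pentagonal_term //.
rewrite -big_mkcond /omega /=; case: pickP => [j0 hj0|none].
  rewrite (eq_bigl (pred1 (nat_of_ord j0))) => [|j]; last first.
    by apply/idP/eqP => [/pent_idx_uniq/(_ hj0) //|->].
  by rewrite big_nat1_eq /= (leq_trans (ltn_ord j0)).
rewrite big1_seq // => j /andP [hj _].
have := none (Ordinal (pent_idx_leq hj : (j < t.+2)%N)).
by rewrite /= hj.
Qed.

Definition npart (k : nat) : nat := #|[set f : {ffun 'I_k -> 'I_k.+1} | is_partition f]|.

Definition geom_trunc (n i : nat) : {poly int} := \sum_(j < n.+1) 'X^(i.+1 * j).
Definition part_series (n : nat) : {poly int} := \prod_(i < n) geom_trunc n i.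

Lemma geom_truncE n i : (1 - 'X^(i.+1)) * geom_trunc n i = 1 - 'X^(i.+1 * n.+1).
Proof.
rewrite /geom_trunc; under eq_bigr do rewrite exprM.
by rewrite exprM -[1 - _ in LHS]opprB mulNr -subrX1 opprB.
Qed.

Lemma euler_tail_part_series n : eqmodXn n.+1 (euler_tail n 0 * part_series n) 1.
Proof.
rewrite /euler_tail /part_series big_mkord -big_split /=.
apply: eqmodXn_prod1 => i _; rewrite geom_truncE -[X in eqmodXn _ _ X]subr0.
by apply/eqmodXnD/eqmodXnN/eqmodXn_Xn0; rewrite ?leq_pmull //; apply: eqmodXn_refl.
Qed.

Lemma geom_trunc_leq n k i :
  (k <= n)%N -> eqmodXn k.+1 (geom_trunc n i) (geom_trunc k i).
Proof.
move=> le; rewrite /geom_trunc -!(big_mkord xpredT (fun j => 'X^(i.+1 * j))).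
rewrite (big_cat_nat _ (n := k.+1)) //=; apply: eqmodXn_addr0.
rewrite big_seq; apply: eqmodXn_sum0 => j.
by rewrite mem_index_iota => /andP [kj _]; apply/eqmodXn_Xn0/(leq_trans kj)/leq_pmull.
Qed.

Lemma geom_trunc_high n k i : (k <= i)%N -> eqmodXn k.+1 (geom_trunc n i) 1.
Proof.
move=> le; rewrite /geom_trunc big_ord_recl /= muln0.
apply/eqmodXn_addr0/eqmodXn_sum0 => j _; apply: eqmodXn_Xn0.
by rewrite /bump /= add1n (leq_trans _ (leq_pmulr _ _)).
Qed.

Lemma part_series_leq n k :
  (k <= n)%N -> eqmodXn k.+1 (part_series n) (part_series k).
Proof.
move=> le; rewrite /part_series -!(big_mkord xpredT (geom_trunc _)).
rewrite (big_cat_nat _ (n := k)) //= -[X in eqmodXn _ _ X]mulr1.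
apply: eqmodXnM; first by apply: eqmodXn_prod => i _; apply: geom_trunc_leq.
rewrite big_seq; apply: eqmodXn_prod1 => j.
by rewrite mem_index_iota => /andP [kj _]; apply: geom_trunc_high.
Qed.

(* Expanding the product, a monomial of degree k is a choice of multiplicity
   f i <= k for each part size i.+1, i.e. a partition of k. *)
Lemma coef_part_series_diag k : (part_series k)`_k = (npart k)%:R.
Proof.
rewrite /part_series /geom_trunc.
rewrite (bigA_distr_bigA (fun (i : 'I_k) (j : 'I_k.+1) => 'X^(i.+1 * j) : {poly int})) /=.
under eq_bigr => f _ do rewrite prodrXr.
rewrite coef_sum; under eq_bigr => f _ do rewrite coefXn.
rewrite -natr_sum /npart cardsE -sum1_card /=; congr _%:R.
rewrite [RHS]big_mkcond; apply: eq_bigr => f _; rewrite eq_sym unfold_in /=.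
by case: ifP => [/eqnP -> | /eqnP /eqP /negbTE ->]; rewrite ?eqxx.
Qed.

Lemma coef_part_series n k : (k <= n)%N -> (part_series n)`_k = (npart k)%:R.
Proof.
by move=> le; rewrite -coef_part_series_diag (eqmodXn_coef (part_series_leq le)).
Qed.

Lemma coef_euler_tail n i : (i <= n)%N -> (euler_tail n 0)`_i = omega i%:Z.
Proof.
move=> le; rewrite -(coef_pentagonal le) -shanks_pentagonal.
by rewrite (eqmodXn_coef (shanks_euler_tail n)).
Qed.

Lemma npart_recurrence n : (0 < n)%N ->
  \sum_(i < n.+1) omega i%:Z * (npart (n - i))%:R = 0.
Proof.
move=> n0; have := eqmodXn_coef (euler_tail_part_series n) (ltnSn n).
rewrite coefC (gtn_eqF n0) coefM => coef_n; rewrite -[RHS]coef_n; apply: eq_bigr => i _.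
by rewrite coef_euler_tail -1?ltnS // coef_part_series // leq_subr.
Qed.

Local Close Scope ring_scope.

Lemma big_nat_dvd_mul (R : Type) (idx : R) (op : Monoid.law idx) (d m : nat)
    (F : nat -> R) :
  0 < d -> (forall j, ~~ (d %| j.+1) -> F j = idx) ->
  \big[op/idx]_(0 <= j < m * d) F j = \big[op/idx]_(0 <= l < m) F (l * d + d.-1).
Proof.
case: d => // d _ F0; elim: m => [|m IH]; first by rewrite mul0n !big_geq.
rewrite big_nat_recr //= -IH mulSn addnC (big_cat_nat _ (leq_addr _ _)) //=.
congr (op _ _); rewrite addnS big_nat_recr ?leq_addr //= big1_seq ?Monoid.simpm // => j.
rewrite mem_index_iota => /andP [lo hi]; apply: F0; apply/negP => dvd_d.
have : d.+1 %| j.+1 - m * d.+1 by rewrite dvdn_sub ?dvdn_mull.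
by move/dvdn_leq; lia.
Qed.

Section PartitionMultiplicities.
Variable k : nat.
Implicit Types f : {ffun 'I_k -> 'I_k.+1}.

Definition mult f (j : nat) : nat :=
  if insub j is Some i then nat_of_ord (f i) else 0.

Definition part_weight f : nat := \sum_(i < k) i.+1 * f i.

Lemma multE f (i : 'I_k) : mult f i = f i.
Proof. by rewrite /mult valK. Qed.

Lemma mult_out f j : k <= j -> mult f j = 0.
Proof. by move=> le; rewrite /mult insubN // -leqNgt. Qed.

Lemma mult_leq f j : mult f j <= k.
Proof. by rewrite /mult; case: insubP => // i _ _; rewrite -ltnS. Qed.

Lemma is_partitionE f : is_partition f = (part_weight f == k).
Proof. by []. Qed.

Lemma part_weightE f : part_weight f = \sum_(0 <= j < k) j.+1 * mult f j.
Proof. by rewrite big_mkord; apply: eq_bigr => i _; rewrite multE. Qed.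

Lemma parts_gcdE f :
  parts_gcd f = \big[gcdn/0]_(0 <= j < k) (if 0 < mult f j then j.+1 else 0).
Proof.
by rewrite /parts_gcd big_mkcond big_mkord; apply: eq_bigr => i _; rewrite multE.
Qed.

Lemma mult_weight_leq f j : j.+1 * mult f j <= part_weight f.
Proof.
case: (ltnP j k) => [lt|ge]; last by rewrite mult_out // muln0.
by rewrite (multE f (Ordinal lt)) /part_weight (bigD1 (Ordinal lt)) //= leq_addr.
Qed.

Lemma parts_gcd_dvd f j : 0 < mult f j -> parts_gcd f %| j.+1.
Proof.
case: (ltnP j k) => [lt|ge]; last by rewrite mult_out.
rewrite (multE f (Ordinal lt)) => pos.
by rewrite /parts_gcd (bigD1 (Ordinal lt)) ?dvdn_gcdl.
Qed.

Lemma parts_gcd_dvd_weight f : parts_gcd f %| part_weight f.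
Proof.
rewrite part_weightE; apply: dvdn_sum => j _.
by case: (posnP (mult f j)) => [->|/parts_gcd_dvd/dvdn_mulr]; rewrite ?muln0.
Qed.

End PartitionMultiplicities.

Section ScalePartition.
Variables m d : nat.
Hypothesis d_gt0 : 0 < d.

(* Multiplying every part by d: the part (l + 1) d sits at index l * d + d.-1. *)
Definition scale_part (h : {ffun 'I_m -> 'I_m.+1}) : {ffun 'I_(m * d) -> 'I_(m * d).+1} :=
  [ffun i : 'I_(m * d) => inord (if d %| i.+1 then mult h (i.+1 %/ d).-1 else 0)].

Definition unscale_part (f : {ffun 'I_(m * d) -> 'I_(m * d).+1}) : {ffun 'I_m -> 'I_m.+1} :=
  [ffun l : 'I_m => inord (mult f (l * d + d.-1))].

Lemma mulSn_pred l : (l * d + d.-1).+1 = l.+1 * d.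
Proof. by rewrite -addnS prednK // addnC -mulSn. Qed.

Lemma mult_scale_part h j :
  mult (scale_part h) j = if d %| j.+1 then mult h (j.+1 %/ d).-1 else 0.
Proof.
case: (ltnP j (m * d)) => [lt|ge].
  rewrite (multE _ (Ordinal lt)) ffunE inordK //; case: ifP => // _.
  by rewrite ltnS (leq_trans (mult_leq _ _)) ?leq_pmulr.
rewrite mult_out //; case: ifP => // /dvdnP [q hq].
rewrite mult_out // hq mulnK //.
have : m * d < q * d by rewrite -hq.
by rewrite ltn_pmul2r //; case: q {hq}.
Qed.

Lemma mult_scale_part_mul h l : mult (scale_part h) (l * d + d.-1) = mult h l.
Proof. by rewrite mult_scale_part mulSn_pred dvdn_mull // mulnK. Qed.

Lemma part_weight_scale h : part_weight (scale_part h) = d * part_weight h.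
Proof.
rewrite !part_weightE (big_nat_dvd_mul addn _ d_gt0); last first.
  by move=> j hj; rewrite mult_scale_part (negbTE hj) muln0.
rewrite big_distrr /=; apply: eq_big_nat => l _.
by rewrite mult_scale_part_mul mulSn_pred; lia.
Qed.

Lemma parts_gcd_scale h : parts_gcd (scale_part h) = d * parts_gcd h.
Proof.
rewrite !parts_gcdE (big_nat_dvd_mul gcdn _ d_gt0); last first.
  by move=> j hj; rewrite mult_scale_part (negbTE hj).
rewrite (big_morph (muln d) (muln_gcdr d) (muln0 d)); apply: eq_big_nat => l _.
by rewrite mult_scale_part_mul mulSn_pred; case: ifP => _; lia.
Qed.

Lemma scale_part_inj : injective scale_part.
Proof.
move=> h1 h2 eq_h; apply/ffunP => l; apply/ord_inj.
by rewrite -!multE -!(mult_scale_part_mul _ l) eq_h.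
Qed.

Lemma mult_unscale_part f l :
  part_weight f = m * d -> mult (unscale_part f) l = mult f (l * d + d.-1).
Proof.
move=> wf; case: (ltnP l m) => [lt|ge].
  rewrite (multE _ (Ordinal lt)) ffunE inordK //= ltnS.
  have := mult_weight_leq f (l * d + d.-1); rewrite wf mulSn_pred.
  by move: (mult f _) => x; nia.
by rewrite !mult_out // (leq_trans (leq_mul ge (leqnn d))) ?leq_addr.
Qed.

Lemma scale_unscale_part f :
  part_weight f = m * d -> parts_gcd f = d -> scale_part (unscale_part f) = f.
Proof.
move=> wf gf; apply/ffunP => i; apply/ord_inj; rewrite -!multE mult_scale_part.
case: ifP => [/dvdnP [q hq] | nd].
  rewrite mult_unscale_part // hq mulnK //; congr (mult f _).
  by case: q hq => [|q] hq //=; nia.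
by case: (posnP (mult f i)) => // /parts_gcd_dvd; rewrite gf nd.
Qed.

Lemma card_parts_gcd : 0 < m ->
  #|[set f : {ffun 'I_(m * d) -> 'I_(m * d).+1} | is_partition f && (parts_gcd f == d)]|
  = p_psi m.
Proof.
move=> m_gt0; rewrite /p_psi -[RHS](card_imset _ scale_part_inj).
apply: eq_card => f; rewrite [in LHS]inE; apply/idP/imsetP.
  rewrite is_partitionE => /andP [/eqP wf /eqP gf]; exists (unscale_part f).
    rewrite inE is_partitionE; apply/andP; split; rewrite -(eqn_pmul2l d_gt0).
      by rewrite -part_weight_scale scale_unscale_part // wf mulnC.
    by rewrite -parts_gcd_scale scale_unscale_part // gf muln1.
  by rewrite scale_unscale_part.
case=> h; rewrite inE is_partitionE => /andP [/eqP wh /eqP gh] ->.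
by rewrite is_partitionE part_weight_scale parts_gcd_scale wh gh muln1 mulnC !eqxx.
Qed.

End ScalePartition.

Lemma parts_gcd_dvd_size k (f : {ffun 'I_k -> 'I_k.+1}) :
  is_partition f -> parts_gcd f %| k.
Proof. by rewrite is_partitionE => /eqP {2}<-; apply: parts_gcd_dvd_weight. Qed.

Lemma card_parts_gcd_cofactor k j : 0 < k -> j %| k ->
  #|[set f : {ffun 'I_k -> 'I_k.+1} | is_partition f && (parts_gcd f * j == k)]| = p_psi j.
Proof.
move=> k_gt0 /dvdnP [d kE]; move: k_gt0; rewrite kE muln_gt0 => /andP [d_gt0 j_gt0].
rewrite [d * j]mulnC -(card_parts_gcd d_gt0 j_gt0); apply: eq_card => f.
by rewrite !inE (mulnC (parts_gcd f)) eqn_pmul2l.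
Qed.

(* Group partitions of k by the cofactor k %/ parts_gcd f of their gcd. *)
Lemma npart_divisor_sum k : 0 < k ->
  npart k = \sum_(0 <= j < k.+1 | (0 < j) && (j %| k)) p_psi j.
Proof.
move=> k_gt0; rewrite /npart cardsE -sum1_card.
rewrite (partition_big (fun f => inord (k %/ parts_gcd f) : 'I_k.+1) xpredT) //=.
rewrite big_mkord [RHS]big_mkcond /=; apply: eq_bigr => j _.
have cofactorE (f : {ffun 'I_k -> 'I_k.+1}) : is_partition f ->
    (inord (k %/ parts_gcd f) == j) = (parts_gcd f * j == k).
  move=> /parts_gcd_dvd_size g_dvd; have g_gt0 := dvdn_gt0 k_gt0 g_dvd.
  by rewrite -val_eqE /= inordK ?ltnS ?leq_div // eq_sym eqn_div // mulnC.
rewrite sum1_card; case: ifP => [/andP [_ j_dvd] | j_div].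
  rewrite -(card_parts_gcd_cofactor k_gt0 j_dvd); apply: eq_card => f.
  rewrite inE !unfold_in /= -[eqn _ k]/(is_partition f).
  by case pf: (is_partition f) => //=; rewrite cofactorE.
apply: eq_card0 => f; rewrite !unfold_in /= -[eqn _ k]/(is_partition f).
apply/andP => [[pf]]; rewrite cofactorE // => /eqP jE.
have : 0 < parts_gcd f * j by rewrite jE.
rewrite muln_gt0 => /andP [_ j_gt0].
by rewrite j_gt0 -[X in _ %| X]jE dvdn_mull in j_div.
Qed.

Lemma npart0 : npart 0 = 1.
Proof.
rewrite /npart (_ : [set f | is_partition f] = setT) ?cardsT ?card_ffun ?card_ord //.
by apply/setP => f; rewrite !inE /is_partition big_ord0.
Qed.

Local Open Scope ring_scope.

Lemma npart_dvd_sum n k : (0 < k)%N -> (k <= n)%N ->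
  (npart k)%:R = \sum_(1 <= m < n.+1) (m %| k)%N%:R * (p_psi m)%:R :> int.
Proof.
move=> k_gt0 le_kn; rewrite npart_divisor_sum // natr_sum.
rewrite [RHS](big_cat_nat _ (n := k.+1)) //= [X in _ + X]big1_seq ?addr0 => [|m].
  rewrite big_mkcond big_nat_recl //= add0r -(add0n 1%N) big_addn subn1 /=.
  by apply: eq_big_nat => m _; rewrite addn1; case: (m.+1 %| k)%N; rewrite ?mul1r ?mul0r.
by rewrite mem_index_iota => /andP [_ /andP [lt_km _]]; rewrite gtnNdvd ?mul0r.
Qed.

Lemma OmegaE m k : (0 < m)%N ->
  Omega m k%:Z = omega k%:Z + (if (m <= k)%N then Omega m (k - m)%N%:Z else 0).
Proof.
move=> m_gt0; rewrite /Omega /= big_nat_recl // mul0n subr0; congr (_ + _).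
case: ifP => le_mk; last first.
  by rewrite big1_seq // => j _; apply: omega_neg; rewrite subr_lt0 ltz_nat; nia.
rewrite /= (big_cat_nat _ (n := (k - m).+1)) //=; last by lia.
rewrite [X in _ + X]big1_seq ?addr0 => [|j]; last first.
  rewrite mem_index_iota => /andP [lo hi].
  by apply: omega_neg; rewrite subr_lt0 ltz_nat; nia.
by apply: eq_big_nat => j _; rewrite -subzn // mulSn PoszD opprD addrA.
Qed.

Definition omega_dvd_sum (m N : nat) : int :=
  \sum_(0 <= i < N) (m %| N - i)%N%:R * omega i%:Z.

Lemma omega_dvd_sum_small m N : (N < m)%N -> omega_dvd_sum m N = 0.
Proof.
move=> lt_Nm; rewrite /omega_dvd_sum big1_seq // => i; rewrite mem_index_iota.
by move=> /andP [_ /andP [_ lt_iN]]; rewrite gtnNdvd ?mul0r //; lia.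
Qed.

Lemma omega_dvd_sum_sub m N : (0 < m)%N -> (m <= N)%N ->
  omega_dvd_sum m N = omega (N - m)%N%:Z + omega_dvd_sum m (N - m).
Proof.
move=> m_gt0 le_mN; rewrite /omega_dvd_sum (big_cat_nat _ (leq_subr m N)) //= addrC.
congr (_ + _); last first.
  apply: eq_big_nat => i /andP [_ lt_i].
  by rewrite (_ : N - i = N - m - i + m)%N ?dvdn_addl //; lia.
rewrite big_ltn ?subKn ?dvdnn ?mul1r; try lia.
rewrite big1_seq ?addr0 // => i; rewrite mem_index_iota => /andP [_ /andP [lo hi]].
by rewrite gtnNdvd ?mul0r //; lia.
Qed.

(* Both sides satisfy the recursion F(N) = omega(N - m) + F(N - m). *)
Lemma Omega_dvd_sum m N : (0 < m)%N -> (m <= N)%N ->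
  Omega m (N - m)%N%:Z = omega_dvd_sum m N.
Proof.
move=> m_gt0; elim/ltn_ind: N => N IH le_mN.
rewrite OmegaE // omega_dvd_sum_sub //; congr (_ + _).
by case: ifP => le; [rewrite IH | rewrite omega_dvd_sum_small]; lia.
Qed.

Theorem mainTheorem8 (n : nat) (hn : (1 <= n)%N) :
  - omega n%:Z =
  \sum_(1 <= m < n.+1) (p_psi m)%:Z * Omega m (n - m)%N%:Z.
Proof.
have rec := npart_recurrence hn.
rewrite big_ord_recr /= subnn npart0 mulr1 in rec.
have -> : - omega n%:Z = \sum_(0 <= i < n) omega i%:Z * (npart (n - i))%:R.
  by apply/eqP; rewrite eq_sym -addr_eq0 big_mkord rec.
transitivity (\sum_(0 <= i < n) \sum_(1 <= m < n.+1)
                omega i%:Z * ((m %| n - i)%N%:R * (p_psi m)%:R)).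
  apply: eq_big_nat => i /andP [_ lt_in].
  by rewrite (npart_dvd_sum (n := n)) ?big_distrr //; lia.
rewrite exchange_big_nat; apply: eq_big_nat => m /andP [m_gt0 le_mn].
rewrite Omega_dvd_sum // /omega_dvd_sum big_distrr; apply: eq_big_nat => i _.
by rewrite /=; ring.
Qed.
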